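(* Let $T$ be a reduced linear trellis of length $n$. Any two elementary trellis factorizations of $T$ have the same span distribution. More precisely, for every span $\mathfrak{s}$, the number of factors with span $\mathfrak{s}$ in any elementary trellis factorization of $T$ equals $$\dim\mathbb{S}_{\mathfrak{s}}(T)-\dim\mathbb{S}_{<\mathfrak{s}}(T)=\dim\bigl(\mathbb{S}_{\mathfrak{s}}(T)/\mathbb{S}_{<\mathfrak{s}}(T)\bigr).$$
   Context: Let $\mathbb{F}$ be a finite field and $n\ge1$; indices are taken in $\mathbb{Z}_n$. A trellis $T$ of length $n$ over $\mathbb{F}$ consists of pairwise disjoint finite vertex sets $V_i(T)$, $i\in\mathbb{Z}_n$, and edge sets $E_i(T)\subseteq V_i(T)\times\mathbb{F}\times V_{i+1}(T)$; $(v,\alpha,w)\in E_i(T)$ is an edge from $v$ to $w$ with label $\alpha$. Trellises are trim. $T$ is linear if each $V_i(T)$ is an $\mathbb{F}$-vector space and each $E_i(T)$ a subspace. A cycle is a closed path of length $n$ starting in $V_0(T)$, identified with $(\mathbf{v},\boldsymbol{\alpha})\in\prod_iV_i(T)\times\mathbb{F}^n$; $\mathbb{S}(T)$ is the space of cycles. $T$ is reduced if every edge lies on a cycle. $T\sim T'$ means there are bijections $f_i:V_i(T)\to V_i(T')$ with $(v,\alpha,w)\in E_i(T)\iff(f_i(v),\alpha,f_{i+1}(w))\in E_i(T')$. Spans: for $a\in\mathbb{Z}_n$, $0\le l\le n-1$, $[a,a+l]=\{a,\dots,a+l\}\subseteq\mathbb{Z}_n$, $(a,a+l]=[a,a+l]\setminus\{a\}$;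 $(a,l)$ is a span; degenerate spans are $\emptyset$ (length $-1$) and $\mathbb{Z}_n$ (length $n$, written $(a,n)$). Partial order: $(a_1,l_1)\le(a_2,l_2)$ iff ($l_1\le l_2<n-1$ and $[a_1,a_1+l_1]\subseteq[a_2,a_2+l_2]$) or ($l_2=n-1$ and $(a_1,a_1+l_1]\subseteq(a_2,a_2+l_2]$) or $l_1=-1$ or $l_2=n$. A vector in $\mathbb{F}^n$ has span $(a,l)$, $0\le l\le n-1$, if its support lies in $[a,a+l]$; $\mathbb{Z}_n$ is a span of every vector. A nondegenerate $(a,l)$ is a span of a cycle $(\mathbf{v},\boldsymbol{\alpha})$ if $\{i:v_i\ne0\}\subseteq(a,a+l]$ and $\{i:\alpha_i\ne0\}\subseteq[a,a+l]$; $\emptyset$ is a span only of the zero cycle and $\mathbb{Z}_n$ of every cycle. $\mathbb{S}_{\mathfrak{s}}(T)$ is the subspace of cycles with span $\mathfrak{s}$; $\mathbb{S}_{<\mathfrak{s}}(T):=\sum_{\mathfrak{s}'\lneq\mathfrak{s}}\mathbb{S}_{\mathfrak{s}'}(T)$. Elementary trellises and products: for $\boldsymbol{\alpha}\in\mathbb{F}^n$ with span $(a,l)$, $0\le l\le n$, the elementary trellis $\boldsymbol{\alpha}|(a,l)$ has $V_i=\mathbb{F}$ for $i\in(a,a+l]$ (all $i$ if $l=n$), $V_i=0$ otherwise, and $E_i=\langle(u_i,\alpha_i,u_{i+1})\rangle$ with $u_i=1$ if $i\in(a,a+l]$, $u_i=0$ otherwise. The product $T\otimes T'$ has $V_i=V_i(T)\times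 V_i(T')$ and $E_i=\{((v,v'),\alpha+\alpha',(w,w')):(v,\alpha,w)\in E_i(T),(v',\alpha',w')\in E_i(T')\}$. An elementary trellis factorization of $T$ is an expression $T\sim\bigotimes_{i=1}^r\boldsymbol{\alpha}^i|(a_i,l_i)$, where by convention at most one factor has span $(a,0)$ for each $a\in\mathbb{Z}_n$; its span distribution is the multiset $\{\{(a_i,l_i):i=1,\dots,r\}\}$. *)

From Stdlib Require List.
From HB Require Import structures.
From mathcomp Require Import all_boot all_order all_algebra.
Set Implicit Arguments. Unset Strict Implicit. Unset Printing Implicit Defensive.
Import GRing.Theory.
Local Open Scope ring_scope.

(* Indices Z_n are represented by 'I_n (with 0 < n); i+1 is [ordS i]. *)

(* [SSeg a l] is the nondegenerate span (a,l), 0 <= l <= n-1 (l : 'I_n);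
   [SEmpty] is the empty span (length -1) and [SFull] is Z_n (length n,
   i.e. any (a,n)). *)
Variant tspan (n : nat) := SEmpty | SFull | SSeg of 'I_n & 'I_n.
Arguments SEmpty {n}. Arguments SFull {n}.

Definition span_eqb n (s1 s2 : tspan n) : bool :=
  match s1, s2 with
  | SEmpty, SEmpty => true
  | SFull, SFull => true
  | SSeg a l, SSeg a' l' => (a == a') && (l == l')
  | _, _ => false
  end.

(* i \in [a, a+l] and i \in (a, a+l] in Z_n *)
Definition in_cc n (a l i : 'I_n) : bool := ((i + n - a) %% n <= l)%N.
Definition in_oc n (a l i : 'I_n) : bool := (0 < (i + n - a) %% n <= l)%N.

Definition span_le n (s1 s2 : tspan n) : bool :=
  match s1, s2 with
  | SEmpty, _ => true
  | _, SFull => true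
  | SFull, _ => false
  | SSeg _ _, SEmpty => false
  | SSeg a1 l1, SSeg a2 l2 =>
      ((l1 <= l2)%N && (l2 < n.-1)%N &&
         [forall i, in_cc a1 l1 i ==> in_cc a2 l2 i])
      || ((l2 == n.-1 :> nat) && [forall i, in_oc a1 l1 i ==> in_oc a2 l2 i])
  end.

Definition span_lt n (s1 s2 : tspan n) : bool :=
  ~~ span_eqb s1 s2 && span_le s1 s2.

Definition all_spans n : seq (tspan n) :=
  SEmpty :: SFull :: [seq SSeg a l | a <- enum 'I_n, l <- enum 'I_n].

Definition vec_has_span (F : nzRingType) n (s : tspan n) (alpha : 'I_n -> F) : Prop :=
  match s with
  | SEmpty => forall i, alpha i = 0
  | SFull => True
  | SSeg a l => forall i, alpha i != 0 -> in_cc a l i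
  end.

Record trellis (F : Type) (n : nat) := Trellis {
  vtx : 'I_n -> finType;
  edge : forall i : 'I_n, vtx i -> F -> vtx (ordS i) -> Prop }.
Arguments vtx {F n} t i.
Arguments edge {F n} t i _ _ _.

Definition tr_equiv F n (T T' : trellis F n) : Prop :=
  exists f : forall i, vtx T i -> vtx T' i,
    (forall i, bijective (f i)) /\
    (forall i v a w, edge T i v a w <-> edge T' i (f i v) a (f (ordS i) w)).

Definition tprod (F : nzRingType) n (T T' : trellis F n) : trellis F n :=
  @Trellis F n (fun i => (vtx T i * vtx T' i)%type)
    (fun i vv a ww => exists a1 a2, a = a1 + a2 /\
        edge T i vv.1 a1 ww.1 /\ edge T' i vv.2 a2 ww.2).

Definition tunit (F : nzRingType) n : trellis F n :=
  @Trellis F n (fun _ => unit) (fun _ _ a _ => a = 0).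

Definition active n (s : tspan n) (i : 'I_n) : bool :=
  match s with
  | SEmpty => false
  | SFull => true
  | SSeg a l => in_oc a l i
  end.

(* elementary trellis alpha|s : V_i = F if i active, V_i = 0 = {0} otherwise;
   E_i = < (u_i, alpha_i, u_{i+1}) >. *)
Definition elem_trellis (F : finFieldType) n (alpha : 'I_n -> F) (s : tspan n)
  : trellis F n :=
  @Trellis F n (fun i => {x : F | active s i || (x == 0)})
    (fun i v b w =>
       let u j := (if active s j then 1 else 0 : F) in
       exists c : F, val v = c * u i /\ b = c * alpha i /\ val w = c * u (ordS i)).

Record factor (F : Type) (n : nat) := Factor { fvec : 'I_n -> F; fspan : tspan n }.

Definition tprod_list (F : finFieldType) n (fs : seq (factor F n)) : trellis F n :=
  foldr (fun f T => tprod (elem_trellis (fvec f) (fspan f)) T) (tunit F n) fs.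

Definition is_point_span n (a : 'I_n) (s : tspan n) : bool :=
  match s with SSeg a' l => (a' == a) && (val l == 0)%N | _ => false end.

Definition valid_factor (F : finFieldType) n (f : factor F n) : Prop :=
  fspan f <> SEmpty /\ vec_has_span (fspan f) (fvec f) /\
  (forall a, is_point_span a (fspan f) -> exists i, fvec f i != 0).

(* V_i is a subspace of an ambient space F^m (every finite-dimensional space
   is, up to linear isomorphism), E_i a subspace of V_i x F x V_{i+1}. *)
Record ltrellis (F : finFieldType) (n : nat) := LTrellis {
  ldim : nat;
  lV : 'I_n -> {vspace 'rV[F]_ldim};
  lE : forall i : 'I_n, {vspace ('rV[F]_ldim * F^o * 'rV[F]_ldim)%type};
  lE_sub : forall (i : 'I_n) v (a : F) w, (v, a, w) \in lE i ->
      (v \in lV i) /\ (w \in lV (ordS i)) }.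
Arguments ldim {F n} l.
Arguments lV {F n} l i.
Arguments lE {F n} l i.

Definition ltr (F : finFieldType) n (T : ltrellis F n) : trellis F n :=
  @Trellis F n (fun i => {v : 'rV[F]_(ldim T) | v \in lV T i})
    (fun i v a w => (val v, a : F^o, val w) \in lE T i).

Definition cyc_amb (F : finFieldType) n m :=
  ({ffun 'I_n -> 'rV[F]_m} * 'rV[F]_n)%type.

Definition is_cycle (F : finFieldType) n (T : ltrellis F n)
  (x : cyc_amb F n (ldim T)) : bool :=
  [forall i : 'I_n, (x.1 i, x.2 0 i : F^o, x.1 (ordS i)) \in lE T i].

Arguments is_cycle {F n} T x.

Definition cyc_has_span (F : finFieldType) n m (s : tspan n)
  (x : cyc_amb F n m) : bool :=
  match s with
  | SEmpty => x == 0
  | SFull => true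
  | SSeg a l => [forall i, (x.1 i != 0) ==> in_oc a l i] &&
                [forall i, (x.2 0 i != 0) ==> in_cc a l i]
  end.

Arguments cyc_has_span {F n m} s x.

Definition Sspan (F : finFieldType) n (T : ltrellis F n) (s : tspan n)
  : {vspace cyc_amb F n (ldim T)} :=
  <<[seq x <- enum {: cyc_amb F n (ldim T)} |
       is_cycle T x && cyc_has_span s x]>>%VS.

Definition Slt (F : finFieldType) n (T : ltrellis F n) (s : tspan n)
  : {vspace cyc_amb F n (ldim T)} :=
  (\sum_(s' <- all_spans n | span_lt s' s) Sspan T s')%VS.

Definition ltrim (F : finFieldType) n (T : ltrellis F n) : Prop :=
  (forall i v, v \in lV T i -> exists (a : F) w, (v, a : F^o, w) \in lE T i) /\
  (forall i w, w \in lV T (ordS i) -> exists v (a : F), (v, a : F^o, w) \in lE T i).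

Definition lreduced (F : finFieldType) n (T : ltrellis F n) : Prop :=
  forall i v (a : F) w, (v, a : F^o, w) \in lE T i ->
    exists x : cyc_amb F n (ldim T), is_cycle T x /\
      x.1 i = v /\ x.2 0 i = a /\ x.1 (ordS i) = w.

Definition is_factorization (F : finFieldType) n (T : ltrellis F n)
  (fs : seq (factor F n)) : Prop :=
  (forall f, List.In f fs -> valid_factor f) /\
  (forall a : 'I_n, (count (fun f => is_point_span a (fspan f)) fs <= 1)%N) /\
  tr_equiv (ltr T) (tprod_list fs).

Definition count_span F n (s : tspan n) (fs : seq (factor F n)) : nat :=
  count (fun f => span_eqb (fspan f) s) fs.

Arguments Sspan {F n} T s.
Arguments Slt {F n} T s.
Arguments ltrim {F n} T.
Arguments lreduced {F n} T.
Arguments is_factorization {F n} T fs.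
Arguments count_span {F n} s fs.

(* Fix vertex bijections T ~ (x)_j alpha^j|s_j.  A cycle of an elementary trellis is a scalar
   multiple of its generating cycle, so the cycles of the product, and hence of T, are
   parametrised by one coefficient c_j in F per factor.  The cycle with coefficients c has span
   s exactly when every factor with c_j <> 0 has span <= s: the labels cannot cancel, because at
   the position of a point span (a,0) only one factor is a point span and the others reaching a
   are active there.  Translating by the cycle of c = 0 gives a bijection coef_cycle from F^N
   onto the cycles of T mapping the vectors supported on {j | s_j <= s} onto S_s(T) and those
   supported on {j | s_j < s} onto S_{<s}(T).  The bijection need not be linear, but comparing
   cardinalities (|V| = |F|^dim V) gives dim S_s(T) = #{j | s_j <= s} and
   dim S_{<s}(T) = #{j | s_j < s}, whose difference counts the factors of span s. *)
From HB Require Import structures.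
From mathcomp Require Import all_boot all_order all_algebra finfield zify.
From Stdlib Require Import IndefiniteDescription.
Set Implicit Arguments. Unset Strict Implicit. Unset Printing Implicit Defensive.
Import GRing.Theory.

Section CyclicIndices.
Variable n : nat.

(* [offset b x] is the representative of x - b in [0, n), so that
   [in_cc a l i = (offset a i <= l)] and [in_oc a l i = (0 < offset a i <= l)]. *)
Definition offset (b x : 'I_n) : nat := (x + n - b) %% n.
Definition shift (a : 'I_n) k : 'I_n := iter k (@ordS n) a.

Lemma offset_lt b x : (offset b x < n)%N.
Proof. by have := ltn_ord b; rewrite ltn_mod; lia. Qed.

Lemma val_shift a k : val (shift a k) = ((a + k) %% n)%N.
Proof.
elim: k => [|k IH] /=; first by rewrite addn0 modn_small.
rewrite IH /= -addn1 modnDml; congr (_ %% _)%N; lia.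
Qed.

Lemma offset_shift b a k : offset b (shift a k) = ((offset b a + k) %% n)%N.
Proof.
rewrite /offset val_shift.
have := ltn_ord b; have := ltn_ord a => ? ?.
have -> : ((a + k) %% n + n - b = (a + k) %% n + (n - b))%N by lia.
rewrite modnDml modnDml; congr (_ %% _)%N; lia.
Qed.

Lemma offsetii a : offset a a = 0%N.
Proof. by rewrite /offset addKn modnn. Qed.

Lemma offsetK a : cancel (offset a) (shift a).
Proof.
move=> i; apply: val_inj; rewrite val_shift /offset.
have := ltn_ord i; have := ltn_ord a => ? ?.
case: (leqP a i) => le_ai.
  have -> : (i + n - a = (i - a) + n)%N by lia.
  by rewrite modnDr (@modn_small (i - a)) ?subnKC ?modn_small //; lia.
rewrite (@modn_small (i + n - a)); last lia.
have -> : (a + (i + n - a) = i + n)%N by lia.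
by rewrite modnDr modn_small.
Qed.

Lemma offset_eq0 a i : offset a i = 0%N -> i = a.
Proof. by move=> H; rewrite -(offsetK a i) H. Qed.

Lemma offset_ordS a i : offset a (ordS i) = ((offset a i).+1 %% n)%N.
Proof. by rewrite -[ordS i]/(shift i 1) offset_shift addn1. Qed.

Lemma in_oc_cc (a l i : 'I_n) : in_oc a l i -> in_cc a l i.
Proof. by rewrite /in_oc /in_cc => /andP[]. Qed.

Lemma in_oc_ordS (a l i : 'I_n) : in_oc a l (ordS i) -> in_cc a l i.
Proof.
rewrite /in_oc /in_cc -!/(offset _ _) offset_ordS.
have := offset_lt a i => ?.
case: (ltnP (offset a i).+1 n) => lt_n; first by rewrite modn_small //; lia.
have -> : (offset a i).+1 = n by lia.
by rewrite modnn.
Qed.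

Lemma in_cc_full a (l : 'I_n) i : val l = n.-1 -> in_cc a l i.
Proof. by rewrite /in_cc -/(offset _ _) => ->; have := offset_lt a i; lia. Qed.

Lemma in_ocii (a l : 'I_n) : in_oc a l a = false.
Proof. by rewrite /in_oc -/(offset _ _) offsetii. Qed.

Lemma in_ccii (a l : 'I_n) : in_cc a l a.
Proof. by rewrite /in_cc -/(offset _ _) offsetii. Qed.

Lemma in_cc_shift (a l : 'I_n) k : (k <= l)%N -> in_cc a l (shift a k).
Proof.
move=> le_kl; rewrite /in_cc -/(offset _ _) offset_shift offsetii add0n modn_small //.
by have := ltn_ord l; lia.
Qed.

Lemma in_cc_sub_len (a1 l1 a2 l2 : 'I_n) :
  (l2 < n.-1)%N -> (forall i, in_cc a1 l1 i -> in_cc a2 l2 i) -> (l1 <= l2)%N.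
Proof.
move=> lt_l2 sub12; rewrite leqNgt; apply/negP => lt_l21.
have le_t : (offset a2 a1 <= l2)%N by apply: sub12; apply: in_ccii.
have := sub12 _ (@in_cc_shift a1 l1 (l2.+1 - offset a2 a1) ltac:(lia)).
by rewrite /in_cc -/(offset _ _) offset_shift modn_small; lia.
Qed.

(* If a2 were in (a1, a1+l1], its predecessor a2 + (n-1) would be in [a1, a1+l1], hence in
   [a2, a2+l2], forcing l2 >= n-1. *)
Lemma in_cc_sub_oc (a1 l1 a2 l2 : 'I_n) :
  (l2 < n.-1)%N -> (forall i, in_cc a1 l1 i -> in_cc a2 l2 i) ->
  (forall i, in_oc a1 l1 i -> in_oc a2 l2 i).
Proof.
move=> lt_l2 sub12 i oc_i; have cc_i := sub12 _ (in_oc_cc oc_i).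
apply/andP; split=> //; rewrite lt0n; apply/eqP => /offset_eq0 i_a2; subst i.
have := sub12 (shift a2 n.-1).
rewrite /in_cc -!/(offset _ _) !offset_shift offsetii add0n (@modn_small n.-1); last lia.
move: oc_i; rewrite /in_oc -/(offset _ _) => /andP[off_gt0 off_le].
have -> : ((offset a1 a2 + n.-1) %% n = (offset a1 a2).-1)%N.
  rewrite -(@modn_small (offset a1 a2).-1 n); last by have := offset_lt a1 a2; lia.
  by rewrite -(modnDr (offset a1 a2).-1 n); congr (_ %% _)%N; lia.
by move/(_ ltac:(lia)); lia.
Qed.

Lemma shift_eq (T : Type) (g : 'I_n -> T) a L :
  (forall k, (k < L)%N -> g (shift a k) = g (shift a k.+1)) ->
  forall k, (k <= L)%N -> g (shift a k) = g a.
Proof.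
move=> step; elim=> [//|k IH] lt_kL.
by rewrite -step // IH // ltnW.
Qed.

Definition in_span (s : tspan n) (i : 'I_n) : bool :=
  match s with SEmpty => false | SFull => true | SSeg a l => in_cc a l i end.

Lemma active_in_span (s : tspan n) i : active s i -> in_span s i.
Proof. by case: s => //= a l; apply: in_oc_cc. Qed.

Lemma point_in_span b (s : tspan n) i : is_point_span b s -> in_span s i -> i = b.
Proof.
case: s => //= a l /andP[/eqP-> /eqP l0].
rewrite /in_cc -/(offset _ _) => le_l; apply: offset_eq0.
by move: le_l l0; rewrite -[val l]/(nat_of_ord l); lia.
Qed.

(* When (a, a+l] is nonempty it contains a+1, and [a, a+l] adds only a, the predecessor of a+1. *)
Lemma in_span_sub (s0 s : tspan n) i0 :
  active s0 i0 -> (forall i, active s0 i -> active s i) ->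
  forall i, in_span s0 i -> in_span s i.
Proof.
move=> act_i0 act_sub i; case: s0 act_i0 act_sub => //= [_|a l act_i0] act_sub.
  case: s act_sub => //= [/(_ i isT) //|a l /(_ a isT)]; by rewrite in_ocii.
move=> cc_i; case oc_i: (in_oc a l i); first exact/active_in_span/act_sub.
have i_a : i = a.
  move: cc_i oc_i; rewrite /in_oc /in_cc => ->; rewrite andbT lt0n => /negbFE/eqP.
  exact: offset_eq0.
subst i; have l_gt0 : (0 < l)%N by move: act_i0; rewrite /in_oc; lia.
have oc_a1 : in_oc a l (ordS a).
  rewrite /in_oc -/(offset _ _) offset_ordS offsetii modn_small //.
  by have := ltn_ord l; lia.
by case: s {act_sub} (act_sub _ oc_a1) => //= a' l'; apply: in_oc_ordS.
Qed.

Hypothesis n_gt0 : (0 < n)%N.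

Lemma active_or_point (s : tspan n) :
  s <> SEmpty -> (exists i, active s i) \/ (exists b, is_point_span b s).
Proof.
case: s => //= [_|a l _]; first by left; exists (Ordinal n_gt0).
have [l0|l_gt0] := posnP l; first by right; exists a; rewrite eqxx; apply/eqP.
left; exists (ordS a); rewrite /in_oc -/(offset _ _) offset_ordS offsetii modn_small //.
by have := ltn_ord l; lia.
Qed.

Lemma span_leP (s1 s2 : tspan n) :
  span_le s1 s2 <-> (forall i, active s1 i -> active s2 i) /\
                    (forall i, in_span s1 i -> in_span s2 i).
Proof.
case: s1 => [|| a1 l1]; case: s2 => [|| a2 l2] //=.
- by split=> [//|[_ sp12]]; apply: (sp12 (Ordinal n_gt0)).
- by split=> [//|[act12 _]]; have := act12 a2; rewrite in_ocii; apply.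
- by split=> [//|[_ sp12]]; apply: (sp12 a1 (in_ccii a1 l1)).
have [l2_full|l2_part] := eqVneq (val l2) n.-1.
  rewrite l2_full ltnn andbF /=; split.
    move=> /forallP oc12; split=> [i|i _]; first exact/implyP.
    exact: in_cc_full.
  by move=> [oc12 _]; apply/forallP=> i; apply/implyP/oc12.
have lt_l2 : (l2 < n.-1)%N.
  by move: l2_part; rewrite -[val l2]/(nat_of_ord l2) => /eqP; have := ltn_ord l2; lia.
rewrite lt_l2 andbT orbF; split.
  move=> /andP[_ /forallP cc12].
  have cc12' i : in_cc a1 l1 i -> in_cc a2 l2 i by apply/implyP.
  by split=> //; apply: in_cc_sub_oc.
move=> [_ cc12]; rewrite (in_cc_sub_len lt_l2 cc12) /=.
by apply/forallP=> i; apply/implyP/cc12.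
Qed.

Lemma span_le_refl (s : tspan n) : span_le s s.
Proof. exact/span_leP. Qed.

Lemma span_le_trans (s1 s2 s3 : tspan n) :
  span_le s1 s2 -> span_le s2 s3 -> span_le s1 s3.
Proof.
move=> /span_leP[act12 sp12] /span_leP[act23 sp23].
by apply/span_leP; split=> i /[dup] _; [move/act12/act23 | move/sp12/sp23].
Qed.

Lemma span_eqbP (s1 s2 : tspan n) : reflect (s1 = s2) (span_eqb s1 s2).
Proof.
apply: (iffP idP); last by move=> <-; case: s1 => //= a l; rewrite !eqxx.
by case: s1; case: s2 => //= a l a' l' /andP[/eqP-> /eqP->].
Qed.

Lemma span_le_anti (s1 s2 : tspan n) : span_le s1 s2 -> span_le s2 s1 -> s1 = s2.
Proof.
move=> /span_leP[act12 sp12] /span_leP[act21 sp21].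
case: s1 act12 sp12 act21 sp21 => [|| a1 l1]; case: s2 => [|| a2 l2] //= act12 sp12 act21 sp21.
- by have := act21 (Ordinal n_gt0) isT.
- by have := sp21 a2 (in_ccii a2 l2).
- by have := act12 (Ordinal n_gt0) isT.
- by have := act12 a2 isT; rewrite in_ocii.
- by have := sp12 a1 (in_ccii a1 l1).
- by have := act21 a1 isT; rewrite in_ocii.
have a12 : a1 = a2.
  have cc1 := sp12 a1 (in_ccii a1 l1).
  have : in_oc a2 l2 a1 = false by apply/negP => /act21; rewrite in_ocii.
  rewrite /in_oc -[(_ <= l2)%N]/(in_cc a2 l2 a1) cc1 andbT lt0n => /negbFE/eqP.
  exact: offset_eq0.
subst a2; congr SSeg; apply/val_inj/eqP; rewrite eqn_leq.
have := sp12 _ (@in_cc_shift a1 l1 l1 (leqnn l1)).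
have := sp21 _ (@in_cc_shift a1 l2 l2 (leqnn l2)).
by rewrite /in_cc -!/(offset _ _) !offset_shift offsetii !add0n !modn_small // => -> ->.
Qed.

End CyclicIndices.

Local Open Scope ring_scope.

Section ProductCycles.
Variables (F : finFieldType) (n : nat).

(* The generating cycle of the elementary trellis alpha|s has vertex u_i = [ucoord s i]. *)
Definition ucoord (s : tspan n) (i : 'I_n) : F := if active s i then 1 else 0.

Lemma elem_vtx_subproof (s : tspan n) (c : F) i : active s i || (c * ucoord s i == 0).
Proof. by rewrite /ucoord; case: (active s i); rewrite ?mulr0 ?eqxx. Qed.

Definition elem_vtx (al : 'I_n -> F) (s : tspan n) (c : F) (i : 'I_n)
  : vtx (elem_trellis al s) i :=
  exist _ (c * ucoord s i) (elem_vtx_subproof s c i).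

Fixpoint prod_vtx (fs : seq (factor F n)) (c : nat -> F) (i : 'I_n)
  : vtx (tprod_list fs) i :=
  match fs return vtx (tprod_list fs) i with
  | [::] => tt
  | f :: fs' => (elem_vtx (fvec f) (fspan f) (c 0%N) i, prod_vtx fs' (fun k => c k.+1) i)
  end.

Fixpoint prod_label (fs : seq (factor F n)) (c : nat -> F) (i : 'I_n) : F :=
  match fs with
  | [::] => 0
  | f :: fs' => c 0%N * fvec f i + prod_label fs' (fun k => c k.+1) i
  end.

Definition factor0 : factor F n := Factor (fun _ => 0) SEmpty.

Lemma prod_labelE fs c i :
  prod_label fs c i = \sum_(j < size fs) c j * fvec (nth factor0 fs j) i.
Proof.
elim: fs c => [|f fs IH] c /=; first by rewrite big_ord0.
by rewrite big_ord_recl IH.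
Qed.

Lemma prod_edge fs c i :
  edge (tprod_list fs) i (prod_vtx fs c i) (prod_label fs c i) (prod_vtx fs c (ordS i)).
Proof.
elim: fs c => [//|f fs IH] c /=.
exists (c 0%N * fvec f i), (prod_label fs (fun k => c k.+1) i).
by split=> //; split; [exists (c 0%N) | exact: IH].
Qed.

Lemma prod_vtx_eq fs c c' i :
  prod_vtx fs c i = prod_vtx fs c' i <->
  (forall j, (j < size fs)%N -> active (fspan (nth factor0 fs j)) i -> c j = c' j).
Proof.
elim: fs c c' => [|f fs IH] c c' /=; first by split=> // _ [].
split.
  move=> E [|j] /= lt_j act_j.
    by have := congr1 (fun p => val p.1) E; rewrite /= /ucoord act_j !mulr1.
  by have /IH := congr1 snd E; apply.
move=> eq_c; congr pair; last by apply/IH => j lt_j; apply: (eq_c j.+1).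
apply: val_inj => /=; rewrite /ucoord.
by case act_i: (active _ i); rewrite ?mulr0 // (eq_c 0%N).
Qed.

Hypothesis n_gt0 : (0 < n)%N.

(* The cycles of alpha|s are the multiples of its generating cycle: following an edge whose
   head is active propagates the coefficient, and the active positions together with the
   support of alpha form one chain of consecutive positions. *)
Lemma elem_cycle_coef (al : 'I_n -> F) (s : tspan n)
    (v : forall i, vtx (elem_trellis al s) i) (a : 'I_n -> F) :
  vec_has_span s al ->
  (forall i, edge (elem_trellis al s) i (v i) (a i) (v (ordS i))) ->
  exists c0, forall i, v i = elem_vtx al s c0 i /\ a i = c0 * al i.
Proof.
move=> al_s cyc.
have cyc' i : exists c, sval (v i) = c * ucoord s i /\ a i = c * al i /\
                        sval (v (ordS i)) = c * ucoord s (ordS i) := cyc i.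
have [C C_spec] := functional_choice _ cyc'.
have link i : active s (ordS i) -> C i = C (ordS i).
  move=> act; have [_ [_ E1]] := C_spec i; have [E2 _] := C_spec (ordS i).
  by move: E1; rewrite E2 /ucoord act !mulr1.
case: s v al_s {cyc cyc'} C_spec link => [|| b l] v al_s C_spec link.
- exists 0 => i; have [E1 [E2 _]] := C_spec i; split.
    by apply: val_inj; rewrite /= E1 /ucoord !mulr0.
  by rewrite E2 al_s !mulr0.
- pose o := Ordinal n_gt0.
  have C_o i : C i = C o.
    rewrite -(offsetK o i); apply: (@shift_eq _ _ C o n.-1) => [k _|]; first exact: link.
    by have := offset_lt o i; lia.
  exists (C o) => i; have [E1 [E2 _]] := C_spec i.
  by split; [apply: val_inj; rewrite /= E1 | rewrite E2]; rewrite C_o.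
- have C_b i : in_cc b l i -> C i = C b.
    rewrite /in_cc -/(offset _ _) => le_l; rewrite -(offsetK b i).
    apply: (@shift_eq _ _ C b l) => // k lt_kl; apply: link.
    rewrite /= /in_oc -/(offset b (shift b k.+1)) offset_shift offsetii add0n modn_small //.
    by have := ltn_ord l; lia.
  exists (C b) => i; have [E1 [E2 _]] := C_spec i; split.
    apply: val_inj; rewrite /= E1 /ucoord /=.
    by case act_i: (in_oc b l i); rewrite ?mulr0 // C_b // in_oc_cc.
  rewrite E2; have [-> | al_i] := eqVneq (al i) 0; first by rewrite !mulr0.
  by rewrite C_b // al_s.
Qed.

Lemma prod_cycle_coef fs (vs : forall i, vtx (tprod_list fs) i) (be : 'I_n -> F) :
  (forall j, (j < size fs)%N ->
     vec_has_span (fspan (nth factor0 fs j)) (fvec (nth factor0 fs j))) ->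
  (forall i, edge (tprod_list fs) i (vs i) (be i) (vs (ordS i))) ->
  exists c : nat -> F, (forall i, vs i = prod_vtx fs c i) /\ (forall i, be i = prod_label fs c i).
Proof.
elim: fs vs be => [|f fs IH] vs be fs_span cyc /=.
  by exists (fun _ => 0); split=> i; [case: (vs i) | exact: cyc].
have split_label i : exists p : F * F, be i = p.1 + p.2 /\
    edge (elem_trellis (fvec f) (fspan f)) i (vs i).1 p.1 (vs (ordS i)).1 /\
    edge (tprod_list fs) i (vs i).2 p.2 (vs (ordS i)).2.
  by have [a1 [a2 H]] := cyc i; exists (a1, a2).
have [AB AB_spec] := functional_choice _ split_label.
have [c0 c0_spec] := elem_cycle_coef (fs_span 0%N isT) (fun i => (AB_spec i).2.1).
have [c' [c'_vtx c'_lab]] := IH _ _ (fun j => fs_span j.+1) (fun i => (AB_spec i).2.2).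
exists (fun k => if k is k'.+1 then c' k' else c0); split=> i.
  by rewrite -(c0_spec i).1 -c'_vtx; case: (vs i).
by rewrite (AB_spec i).1 (c0_spec i).2 c'_lab.
Qed.

End ProductCycles.
Arguments factor0 {F n}.

Lemma sum_neq0_exists (R : zmodType) (I : finType) (P : I -> R) :
  \sum_j P j != 0 -> exists j, P j != 0.
Proof.
move=> sum_P; apply/existsP; apply: contraR sum_P => /existsPn P0.
by apply/eqP/big1 => j _; apply/eqP; move: (P0 j); rewrite negbK.
Qed.

Section CombinationSpan.
Variables (F : finFieldType) (n N : nat).
Hypothesis n_gt0 : (0 < n)%N.
Variables (sp : 'I_N -> tspan n) (al : 'I_N -> 'I_n -> F).
Hypothesis sp_neq0 : forall j, sp j <> SEmpty.
Hypothesis al_span : forall j i, al j i != 0 -> in_span (sp j) i.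
Hypothesis al_point : forall j b, is_point_span b (sp j) -> al j b != 0.
Hypothesis point_uniq :
  forall j k b, is_point_span b (sp j) -> is_point_span b (sp k) -> j = k.

(* Uniqueness of point spans rules out cancellation against another point-span factor. *)
Lemma point_label_cancel (d : 'I_N -> F) j b :
  is_point_span b (sp j) -> d j != 0 -> \sum_k d k * al k b = 0 ->
  exists k, [/\ d k != 0, al k b != 0 & exists i0, active (sp k) i0].
Proof.
move=> pt_j dj_neq0; rewrite (bigD1 j) //= => /eqP; rewrite addr_eq0 => /eqP sum_j.
have : \sum_(k | k != j) d k * al k b != 0.
  by rewrite -oppr_eq0 -sum_j mulf_neq0 // al_point.
rewrite big_mkcond /= => /sum_neq0_exists[k].
case: (eqVneq k j) => [_|k_neq_j dal_k]; first by rewrite eqxx.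
exists k.
have dk_neq0 : d k != 0 by apply: contraNneq dal_k => ->; rewrite mul0r.
have alk_neq0 : al k b != 0 by apply: contraNneq dal_k => ->; rewrite mulr0.
split=> //; have [//|[b' pt_k]] := active_or_point n_gt0 (@sp_neq0 k).
have b'b := point_in_span pt_k (al_span alk_neq0); subst b'.
by rewrite (point_uniq pt_j pt_k) eqxx in k_neq_j.
Qed.

Lemma comb_span_leP (s : tspan n) (d : 'I_N -> F) :
  ((forall i, (exists j, active (sp j) i /\ d j != 0) -> active s i) /\
   (forall i, \sum_j d j * al j i != 0 -> in_span s i)) <->
  (forall j, d j != 0 -> span_le (sp j) s).
Proof.
split=> [[act_s lab_s] j dj_neq0 | le_s]; last first.
  split=> [i [j [act_j dj_neq0]] | i /sum_neq0_exists[j dal_j]].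
    by have /(span_leP n_gt0)[+ _] := le_s j dj_neq0; apply.
  have dj_neq0 : d j != 0 by apply: contraNneq dal_j => ->; rewrite mul0r.
  have alj_neq0 : al j i != 0 by apply: contraNneq dal_j => ->; rewrite mulr0.
  by have /(span_leP n_gt0)[_] := le_s j dj_neq0; apply; apply: al_span.
have act_sub k : d k != 0 -> forall i, active (sp k) i -> active s i.
  by move=> dk_neq0 i act_k; apply: act_s; exists k.
apply/(span_leP n_gt0); split; first exact: act_sub.
have [[i0 act_i0]|[b pt_j]] := active_or_point n_gt0 (@sp_neq0 j).
  exact: in_span_sub act_i0 (act_sub j dj_neq0).
move=> i /(point_in_span pt_j) ->.
have [lab_b|/lab_s//] := eqVneq (\sum_k d k * al k b) 0.
have [k [dk_neq0 alk_neq0 [i0 act_i0]]] := point_label_cancel pt_j dj_neq0 lab_b.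
exact: in_span_sub act_i0 (act_sub k dk_neq0) _ (al_span alk_neq0).
Qed.

End CombinationSpan.

HB.instance Definition _ (n : nat) := hasDecEq.Build (tspan n) (@span_eqbP n).

Lemma mem_all_spans n (s : tspan n) : s \in all_spans n.
Proof.
case: s => [||a l]; rewrite /all_spans !inE ?eqxx ?orbT //=.
by apply/allpairsPdep; exists a, l; rewrite !mem_enum.
Qed.

Lemma span_le_lt_trans n (n_gt0 : (0 < n)%N) (s1 s2 s3 : tspan n) :
  span_le s1 s2 -> span_lt s2 s3 -> span_lt s1 s3.
Proof.
move=> le12 /andP[neq23 le23]; rewrite /span_lt (span_le_trans n_gt0 le12 le23) andbT.
apply: contra neq23 => /span_eqbP eq13; subst s3.
by rewrite (span_le_anti n_gt0 le23 le12); apply/span_eqbP.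
Qed.

Section CycleSpace.
Variables (F : finFieldType) (n : nat).

Lemma cyc_has_spanP m (s : tspan n) (x : cyc_amb F n m) :
  cyc_has_span s x <->
  (forall i, x.1 i != 0 -> active s i) /\ (forall i, x.2 0 i != 0 -> in_span s i).
Proof.
case: s => [|//|a l] /=; last first.
  split=> [/andP[/forallP act /forallP sp]|[act sp]].
    by split=> i; [move/implyP: (act i) | move/implyP: (sp i)].
  by apply/andP; split; apply/forallP => i; apply/implyP; [apply: act | apply: sp].
split=> [/eqP-> | [act sp]]; first by split=> i; rewrite ?ffunE ?mxE eqxx.
case: x act sp => x1 x2 /= act sp; apply/eqP; congr pair.
  by apply/ffunP => i; rewrite ffunE; apply/eqP/negPn/negP => /act.
by apply/rowP => i; rewrite mxE; apply/eqP/negPn/negP => /sp.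
Qed.

Lemma cyc_has_span0 m (s : tspan n) : cyc_has_span s (0 : cyc_amb F n m).
Proof. by apply/cyc_has_spanP; split=> i; rewrite /= ?ffunE ?mxE eqxx. Qed.

Lemma cyc_has_span_lin m (s : tspan n) k (x y : cyc_amb F n m) :
  cyc_has_span s x -> cyc_has_span s y -> cyc_has_span s (k *: x + y).
Proof.
move=> /cyc_has_spanP[act_x sp_x] /cyc_has_spanP[act_y sp_y].
apply/cyc_has_spanP; split=> i /=; rewrite ?ffunE ?mxE.
  have [x0|/act_x//] := eqVneq (x.1 i) 0.
  by rewrite x0 scaler0 add0r => /act_y.
have [x0|/sp_x//] := eqVneq (x.2 0 i) 0.
by rewrite x0 mulr0 add0r => /sp_y.
Qed.

Variable T : ltrellis F n.

Lemma is_cycle0 : is_cycle T 0.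
Proof.
by apply/forallP => i; rewrite /= !ffunE mxE -[(0, 0, 0)]/(0 : _ * F^o * _) mem0v.
Qed.

Lemma is_cycle_lin k x y : is_cycle T x -> is_cycle T y -> is_cycle T (k *: x + y).
Proof.
move=> /forallP cyc_x /forallP cyc_y; apply/forallP => i; rewrite /= !ffunE !mxE.
have -> : (k *: x.1 i + y.1 i, k * x.2 0 i + y.2 0 i : F^o, k *: x.1 (ordS i) + y.1 (ordS i))
  = k *: (x.1 i, x.2 0 i : F^o, x.1 (ordS i)) + (y.1 i, y.2 0 i : F^o, y.1 (ordS i)) by [].
by rewrite memvD ?memvZ.
Qed.

Lemma is_cycleD x y : is_cycle T x -> is_cycle T y -> is_cycle T (x + y).
Proof. by move=> cyc_x cyc_y; have := is_cycle_lin 1 cyc_x cyc_y; rewrite scale1r. Qed.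

Lemma is_cycleB x y : is_cycle T x -> is_cycle T y -> is_cycle T (x - y).
Proof.
by move=> cyc_x cyc_y; have := is_cycle_lin (-1) cyc_y cyc_x; rewrite scaleN1r addrC.
Qed.

Lemma Sspan_mem s x : (x \in Sspan T s) = is_cycle T x && cyc_has_span s x.
Proof.
apply/idP/idP => [|x_s]; last by apply: memv_span; rewrite mem_filter x_s mem_enum memvf.
rewrite /Sspan span_def big_seq.
elim/big_ind: _ x => [x | U V IHU IHV x | u].
- by rewrite memv0 => /eqP->; rewrite is_cycle0 cyc_has_span0.
- move=> /memv_addP[u u_U [v v_V ->]].
  have /andP[cyc_u sp_u] := IHU u u_U; have /andP[cyc_v sp_v] := IHV v v_V.
  by rewrite is_cycleD // -[u]scale1r cyc_has_span_lin.
rewrite mem_filter => /andP[/andP[cyc_u sp_u] _] x /vlineP[k ->].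
by rewrite -[k *: u]addr0 is_cycle_lin ?is_cycle0 ?cyc_has_span_lin ?cyc_has_span0.
Qed.

Lemma Sspan_sub_Slt s0 s : span_lt s0 s -> (Sspan T s0 <= Slt T s)%VS.
Proof. by move=> lt_s0; rewrite /Slt (big_rem s0) ?mem_all_spans //= lt_s0 addvSl. Qed.

End CycleSpace.

Lemma In_nth (T : Type) (x0 : T) s j : (j < size s)%N -> List.In (nth x0 s j) s.
Proof. by elim: s j => [|x s IH] [|j] //= lt_j; [left | right; apply: IH]. Qed.

Lemma count_card (T : Type) (x0 : T) (p : pred T) s :
  count p s = #|[set j : 'I_(size s) | p (nth x0 s j)]|.
Proof.
rewrite -sum1_count (big_nth x0) big_mkord -sum1_card.
by apply: eq_bigl => j; rewrite inE.
Qed.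

Section FactorizationCycles.
Local Unset Implicit Arguments.
Variables (F : finFieldType) (n : nat).
Hypothesis n_gt0 : (0 < n)%N.
Variables (T : ltrellis F n) (fs : seq (factor F n)).
Variables (f : forall i, vtx (ltr T) i -> vtx (tprod_list fs) i)
          (g : forall i, vtx (tprod_list fs) i -> vtx (ltr T) i).
Hypothesis fK : forall i, cancel (f i) (g i).
Hypothesis gK : forall i, cancel (g i) (f i).
Hypothesis f_edge : forall i v a w,
  edge (ltr T) i v a w <-> edge (tprod_list fs) i (f i v) a (f (ordS i) w).
Hypothesis fs_valid : forall x, List.In x fs -> valid_factor x.
Hypothesis fs_point : forall a : 'I_n, (count (fun x => is_point_span a (fspan x)) fs <= 1)%N.

Local Notation N := (size fs).
Definition fac_span (j : 'I_N) := fspan (nth factor0 fs j).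
Definition fac_vec (j : 'I_N) := fvec (nth factor0 fs j).

Lemma nth_valid j : (j < N)%N -> valid_factor (nth factor0 fs j).
Proof. by move=> lt_j; apply/fs_valid/In_nth. Qed.

Lemma fac_span_neq0 j : fac_span j <> SEmpty.
Proof. exact: (nth_valid j (ltn_ord j)).1. Qed.

Lemma fac_vec_span j i : fac_vec j i != 0 -> in_span (fac_span j) i.
Proof.
have := (nth_valid j (ltn_ord j)).2.1; rewrite /fac_vec /fac_span.
by case: fspan => //= [-> | a l]; [rewrite eqxx | apply].
Qed.

Lemma fac_vec_point j b : is_point_span b (fac_span j) -> fac_vec j b != 0.
Proof.
move=> pt_j; have [i vec_i] := (nth_valid j (ltn_ord j)).2.2 b pt_j.
by rewrite -(point_in_span pt_j (fac_vec_span _ _ vec_i)).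
Qed.

Lemma fac_point_uniq j k b :
  is_point_span b (fac_span j) -> is_point_span b (fac_span k) -> j = k.
Proof.
move=> pt_j pt_k; apply/eqP/negPn/negP => j_neq_k.
have := fs_point b; rewrite (count_card factor0).
have : (#|[set j; k]| <= #|[set j0 : 'I_N | is_point_span b (fspan (nth factor0 fs j0))]|)%N.
  by apply: subset_leq_card; apply/subsetP => x; rewrite !inE => /orP[] /eqP->.
by rewrite cards2 j_neq_k; lia.
Qed.

Definition cyc_of (c : nat -> F) : cyc_amb F n (ldim T) :=
  ([ffun i => val (g i (prod_vtx fs c i))], \row_(i < n) prod_label fs c i).

Definition coef_ext (c : {ffun 'I_N -> F}) (k : nat) : F :=
  if insub k is Some j then c j else 0.

(* f and g are arbitrary bijections, so [cyc_of] is not linear; the translation only makes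
   [coef_cycle 0 = 0]. *)
Definition coef_cycle c := cyc_of (coef_ext c) - cyc_of (fun _ => 0).

Lemma coef_ext_ord c (j : 'I_N) : coef_ext c j = c j.
Proof. by rewrite /coef_ext valK. Qed.

Lemma eq_cyc_of (c c' : nat -> F) : (forall j : 'I_N, c j = c' j) -> cyc_of c = cyc_of c'.
Proof.
move=> eq_c; congr pair.
  apply/ffunP => i; rewrite !ffunE; congr (val (g i _)).
  by apply/prod_vtx_eq => j lt_j _; apply: (eq_c (Ordinal lt_j)).
by apply/rowP => i; rewrite !mxE !prod_labelE; apply: eq_bigr => j _; rewrite eq_c.
Qed.

Lemma cyc_of_cycle c : is_cycle T (cyc_of c).
Proof.
apply/forallP => i; rewrite /= !ffunE mxE.
have : edge (ltr T) i (g i (prod_vtx fs c i)) (prod_label fs c i)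
                      (g (ordS i) (prod_vtx fs c (ordS i))).
  by apply/f_edge; rewrite !gK; apply: prod_edge.
by [].
Qed.

Lemma coef_cycle0 : coef_cycle 0 = 0.
Proof.
by rewrite /coef_cycle (@eq_cyc_of _ (fun _ => 0)) ?subrr // => j; rewrite coef_ext_ord ffunE.
Qed.

Lemma coef_cycle_cycle c : is_cycle T (coef_cycle c).
Proof. by apply: is_cycleB; apply: cyc_of_cycle. Qed.

Lemma coef_cycle_onto x : is_cycle T x -> exists c, x = coef_cycle c.
Proof.
move=> cyc_x; set y := x + cyc_of (fun _ => 0).
have /forallP cyc_y : is_cycle T y by apply/is_cycleD/cyc_of_cycle.
pose vt i : vtx (ltr T) i := exist _ (y.1 i) (lE_sub (cyc_y i)).1.
have edge_y i : edge (tprod_list fs) i (f i (vt i)) (y.2 0 i) (f (ordS i) (vt (ordS i))).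
  by apply/f_edge; apply: cyc_y.
have fs_span j (lt_j : (j < N)%N) := (nth_valid _ lt_j).2.1.
have [c [c_vtx c_lab]] := prod_cycle_coef n_gt0 fs_span edge_y.
exists [ffun j : 'I_N => c j]; apply/(canRL (addrK _)).
have -> : cyc_of (coef_ext [ffun j : 'I_N => c j]) = cyc_of c.
  by apply: eq_cyc_of => j; rewrite coef_ext_ord ffunE.
rewrite -/y [y]surjective_pairing; congr pair.
  by apply/ffunP => i; rewrite [RHS]ffunE -c_vtx fK.
by apply/rowP => i; rewrite [RHS]mxE -c_lab.
Qed.

Lemma coef_cycleB c c' : coef_cycle c - coef_cycle c' = cyc_of (coef_ext c) - cyc_of (coef_ext c').
Proof. by rewrite /coef_cycle opprB addrA subrK. Qed.

Lemma coef_cycleB_vtx c c' i :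
  (coef_cycle c - coef_cycle c').1 i != 0 <->
  exists j : 'I_N, active (fac_span j) i /\ c j - c' j != 0.
Proof.
rewrite coef_cycleB /= !ffunE subr_eq0 (inj_eq val_inj) (inj_eq (can_inj (gK i))).
split=> [neq_i | [j [act_j neq_j]]]; last first.
  apply/negP => /eqP/prod_vtx_eq/(_ j (ltn_ord j) act_j).
  by rewrite !coef_ext_ord => /eqP; rewrite -subr_eq0 (negbTE neq_j).
have /existsP[j /andP[act_j neq_j]] :
    [exists j : 'I_N, active (fac_span j) i && (c j - c' j != 0)].
  apply: contraR neq_i => /existsPn no_j; apply/eqP/prod_vtx_eq => j lt_j act_j.
  have := no_j (Ordinal lt_j); rewrite /fac_span /= act_j subr_eq0 negbK => /eqP.
  by rewrite -[j]/(nat_of_ord (Ordinal lt_j)) !coef_ext_ord.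
by exists j.
Qed.

Lemma coef_cycleB_label c c' i :
  (coef_cycle c - coef_cycle c').2 0 i = \sum_j (c j - c' j) * fac_vec j i.
Proof.
rewrite coef_cycleB /= !mxE !prod_labelE -sumrB.
by apply: eq_bigr => j _; rewrite !coef_ext_ord mulrBl.
Qed.

Lemma coef_cycleB_span s c c' :
  cyc_has_span s (coef_cycle c - coef_cycle c') <->
  (forall j, c j != c' j -> span_le (fac_span j) s).
Proof.
have key := comb_span_leP n_gt0 fac_span_neq0 fac_vec_span fac_vec_point fac_point_uniq s
  (fun j => c j - c' j).
apply: (iff_trans (cyc_has_spanP _ _)); apply: (iff_trans _ (iff_trans key _)).
  split=> [[act lab] | [act lab]]; split=> i.
  - by move=> ex_j; apply/act/coef_cycleB_vtx.
  - by rewrite -coef_cycleB_label; apply: lab.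
  - by move/coef_cycleB_vtx; apply: act.
  - by rewrite coef_cycleB_label; apply: lab.
by split=> le_s j; [rewrite -subr_eq0 | rewrite subr_eq0]; apply: le_s.
Qed.

Lemma coef_cycle_span s c :
  cyc_has_span s (coef_cycle c) <-> (forall j, c j != 0 -> span_le (fac_span j) s).
Proof.
rewrite -[coef_cycle c]subr0 -coef_cycle0; apply: (iff_trans (coef_cycleB_span _ _ _)).
by split=> le_s j; have := le_s j; rewrite ffunE.
Qed.

Lemma coef_cycle_inj : injective coef_cycle.
Proof.
move=> c c' eq_cc'; apply/ffunP => j; apply/eqP/negPn/negP => neq_j.
have : cyc_has_span SEmpty (coef_cycle c - coef_cycle c') by rewrite eq_cc' subrr /=.
by move/coef_cycleB_span/(_ j neq_j); case: (fac_span j) (fac_span_neq0 j).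
Qed.

Definition supp_in (P : pred 'I_N) : {set {ffun 'I_N -> F}} :=
  [set c : {ffun 'I_N -> F} | [forall j, (c j != 0) ==> P j]].

Lemma card_supp_in P : #|supp_in P| = (#|F| ^ #|[set j | P j]|)%N.
Proof.
rewrite -[#|F|]/#|(predT : pred F)| -(card_pffun_on 0 [set j | P j] predT).
apply: eq_card => c; rewrite inE; apply/forallP/pffun_onP => [supp_c | [/subsetP supp_c _] j].
  by split=> //; apply/subsetP => j; rewrite !inE => /(implyP (supp_c j)).
by apply/implyP => cj; have := supp_c j; rewrite !inE; apply.
Qed.

Lemma dim_coef_image (V : {vspace cyc_amb F n (ldim T)}) P :
  (forall x, (x \in V) = (x \in coef_cycle @: supp_in P)) -> \dim V = #|[set j | P j]|.
Proof.
move=> V_img; have := card_vspace V.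
rewrite (eq_card V_img) card_imset; last exact: coef_cycle_inj.
by rewrite card_supp_in => /eqP; rewrite eqn_exp2l ?card_finNzRing_gt1 // => /eqP.
Qed.

Lemma Sspan_coef s x :
  (x \in Sspan T s) = (x \in coef_cycle @: supp_in (fun j => span_le (fac_span j) s)).
Proof.
rewrite Sspan_mem; apply/idP/imsetP => [/andP[cyc_x sp_x] | [c supp_c ->]].
  have [c x_c] := coef_cycle_onto x cyc_x; exists c => //; rewrite inE.
  have /coef_cycle_span le_s : cyc_has_span s (coef_cycle c) by rewrite -x_c.
  by apply/forallP => j; apply/implyP/le_s.
rewrite coef_cycle_cycle; apply/coef_cycle_span => j.
by move: supp_c; rewrite inE => /forallP/(_ j)/implyP.
Qed.

(* Remove the nonzero coordinates of c one at a time: each step changes the cycle by an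
   element of S_{fac_span j} with fac_span j < s. *)
Lemma coef_cycle_Slt s c :
  c \in supp_in (fun j => span_lt (fac_span j) s) -> coef_cycle c \in Slt T s.
Proof.
move Ek : #|[set j | c j != 0]| => k; elim: k c Ek => [|k IH] c Ek supp_c.
  suff -> : c = 0 by rewrite coef_cycle0 mem0v.
  apply/ffunP => j; rewrite ffunE; apply/eqP/negPn/negP => cj.
  by have := cards0_eq Ek => /setP/(_ j); rewrite !inE cj.
have [j0 cj0] : exists j0, j0 \in [set j | c j != 0] by apply/set0Pn; rewrite -card_gt0 Ek.
pose c' := [ffun j => if j == j0 then 0 else c j].
have Ek' : #|[set j | c' j != 0]| = k.
  have -> : [set j | c' j != 0] = [set j | c j != 0] :\ j0.
    by apply/setP => j; rewrite !inE ffunE; case: (eqVneq j j0) => [->|]; rewrite ?eqxx.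
  by move: Ek; rewrite (cardsD1 j0) cj0; lia.
have supp_c' : c' \in supp_in (fun j => span_lt (fac_span j) s).
  move: supp_c; rewrite !inE => /forallP supp_c; apply/forallP => j.
  by rewrite ffunE; case: (eqVneq j j0) => _; [rewrite eqxx | apply: supp_c].
have lt_j0 : span_lt (fac_span j0) s.
  by move: supp_c cj0; rewrite !inE => /forallP/(_ j0)/implyP.
rewrite -[coef_cycle c](subrK (coef_cycle c')) memvD ?(IH c') //.
apply: (subvP (Sspan_sub_Slt T lt_j0)).
rewrite Sspan_mem is_cycleB ?coef_cycle_cycle //=; apply/coef_cycleB_span => j.
by rewrite ffunE; case: (eqVneq j j0) => [-> _ | _]; [apply: span_le_refl | rewrite eqxx].
Qed.

(* The image of [supp_in] is not a subspace, so instead of closing it under sums we show that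
   it is stable under adding elements of S_{<s}. *)
Lemma Slt_coef s x :
  (x \in Slt T s) = (x \in coef_cycle @: supp_in (fun j => span_lt (fac_span j) s)).
Proof.
apply/idP/idP => [x_lt | /imsetP[c supp_c ->]]; last exact: coef_cycle_Slt.
set A := supp_in _.
suff stable : forall c, c \in A -> forall u, u \in Slt T s -> coef_cycle c + u \in coef_cycle @: A.
  have := stable 0 _ x x_lt; rewrite coef_cycle0 add0r; apply.
  by rewrite inE; apply/forallP => j; rewrite ffunE eqxx.
rewrite /Slt; elim/big_ind: _ => [c c_A u | U V stU stV c c_A u | s' lt_s' c c_A u].
- by rewrite memv0 => /eqP->; rewrite addr0 imset_f.
- move=> /memv_addP[u1 u1_U [u2 u2_V ->]].
  rewrite addrA; have /imsetP[c1 c1_A ->] := stU c c_A u1 u1_U.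
  exact: stV.
rewrite Sspan_mem => /andP[cyc_u sp_u].
have [c'' E] := coef_cycle_onto _ (is_cycleD (coef_cycle_cycle c) cyc_u).
rewrite E imset_f //.
have /coef_cycleB_span le_s' : cyc_has_span s' (coef_cycle c'' - coef_cycle c).
  by rewrite -E addrC addKr.
move: c_A; rewrite !inE => /forallP c_A; apply/forallP => j; apply/implyP => c''j.
have [cj0|/(implyP (c_A j))//] := eqVneq (c j) 0.
by apply: (span_le_lt_trans n_gt0 _ lt_s'); apply: le_s'; rewrite cj0.
Qed.

Lemma count_span_dim s : count_span s fs = (\dim (Sspan T s) - \dim (Slt T s))%N.
Proof.
rewrite (dim_coef_image _ _ (Sspan_coef s)) (dim_coef_image _ _ (Slt_coef s)).
rewrite /count_span (count_card factor0).
rewrite -(cardsID [set j | span_lt (fac_span j) s] [set j | span_le (fac_span j) s]).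
have -> : [set j | span_le (fac_span j) s] :&: [set j | span_lt (fac_span j) s] =
          [set j | span_lt (fac_span j) s].
  by apply/setP => j; rewrite !inE /span_lt; case: span_le; rewrite ?andbT ?andbF.
rewrite addKn; apply: eq_card => j; rewrite !inE /span_lt /fac_span.
case: span_eqbP => [->|_]; first by rewrite span_le_refl.
by rewrite andbC; case: span_le.
Qed.

End FactorizationCycles.

Lemma factorization_count_span (F : finFieldType) n (T : ltrellis F n) fs :
  (0 < n)%N -> is_factorization T fs ->
  forall s : tspan n, count_span s fs = (\dim (Sspan T s) - \dim (Slt T s))%N.
Proof.
move=> n_gt0 [fs_valid [fs_point [f [f_bij f_edge]]]] s.
have inv i : {g | cancel (f i) g /\ cancel g (f i)}.
  by apply: constructive_indefinite_description; case: (f_bij i) => g; exists g.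
have fK i := (svalP (inv i)).1; have gK i := (svalP (inv i)).2.
exact: (count_span_dim _ _ n_gt0 _ _ _ _ fK gK f_edge fs_valid fs_point).
Qed.

Theorem mainTheorem8 (F : finFieldType) (n : nat) (T : ltrellis F n) :
  (0 < n)%N -> ltrim T -> lreduced T ->
  (forall fs1 fs2, is_factorization T fs1 -> is_factorization T fs2 ->
     forall s : tspan n, count_span s fs1 = count_span s fs2) /\
  (forall fs, is_factorization T fs ->
     forall s : tspan n,
       count_span s fs = (\dim (Sspan T s) - \dim (Slt T s))%N).
Proof.
move=> n_gt0 _ _; split=> [fs1 fs2 fact1 fact2 s | fs fact]; last exact: factorization_count_span.
by rewrite (factorization_count_span n_gt0 fact1) (factorization_count_span n_gt0 fact2).
Qed.
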